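(* Fix $r\ge1$. For $n\ge0$ let $$P^{(r)}_n(z_1,\dots,z_r)=\sum_{\pi} z_1^{a_1(\pi)}z_2^{a_2(\pi)}\cdots z_r^{a_r(\pi)},$$ the sum over all multiset set-partitions $\pi$ of the multiset $\{1^r,2^r,\dots,n^r\}$ (each of $1,\dots,n$ appearing exactly $r$ times); in particular $P^{(r)}_0=1$. Then for all $n\ge1$, $$P^{(r)}_n(z_1,\dots,z_r)=\mathcal{D}_r\,P^{(r)}_{n-1}(z_1,\dots,z_r),$$ where $\mathcal{D}_r$ is the operator defined in the context. Consequently the number of multiset set-partitions of $\{1^r,\dots,n^r\}$ equals $P^{(r)}_n(1,1,\dots,1)$.
   Context: A multiset set-partition of a finite multiset $M$ is a finite multiset of nonempty sets (ordinary sets, no repeated elements inside a set) whose multiset union equals $M$; the same set may occur several times in the partition, and the partition is unordered. For a multiset set-partition $\pi$ and $i\ge1$, $a_i(\pi)$ denotes the number of distinct sets that occur in $\pi$ exactly $i$ times. Definition of $\mathcal{D}_r$: Put $z_0:=1$ and $D_i:=\partial/\partial z_i$. A scenario is a tuple $T=[c_0,\lambda_1,\dots,\lambda_r]$ where $c_0\ge0$ is an integer and, for each $i$, $\lambda_i$ is an integer partition (possibly empty) all of whose parts are at most $i$, such that $c_0+|\lambda_1|+\cdots+|\lambda_r|=r$ ($|\lambda|$ = sum of parts). Write $m_j(\lambda_i)$ for the number of parts of $\lambda_i$ equal to $j$ and $\ell(\lambda_i)=\sum_j m_j(\lambda_i)$ for its number of parts. To $T$ associate the operator $$\mathcal{P}[T]\,f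 = z_{c_0}\prod_{i=1}^{r}\prod_{j=1}^{i}\frac{(z_j z_{i-j})^{m_j(\lambda_i)}}{m_j(\lambda_i)!}\;\cdot\;\Big(\prod_{i=1}^{r}D_i^{\ell(\lambda_i)}\Big)f ,$$ i.e. all differentiations are applied first and the result is then multiplied by the monomial coefficient (normal ordering). Then $\mathcal{D}_r:=\sum_{T}\mathcal{P}[T]$, the sum over all scenarios $T$. (For example $\mathcal{D}_1 = z_1 + z_1 D_1$, and $\mathcal{D}_2= z_2D_2+\tfrac12 z_1^4D_2^2+z_1^3D_1D_2+\tfrac12 z_1^2D_1^2+z_1^3D_2+z_1^2D_1+z_2$.) *)

From HB Require Import structures.
From mathcomp Require Import all_boot all_order all_algebra.
Set Implicit Arguments. Unset Strict Implicit. Unset Printing Implicit Defensive.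
Import Order.TTheory GRing.Theory Num.Theory.
Local Open Scope ring_scope.

(* Polynomials in z_1..z_r over Q, represented by their coefficient
   functions.  An exponent vector e : expo r has e t = exponent of z_(t+1). *)
Definition expo (r : nat) := {ffun 'I_r -> nat}.
Definition mpoly (r : nat) := expo r -> rat.

(* ---------- multiset set-partitions of {1^r,...,n^r} ----------
   The ground set {1,..,n} is 'I_n (element x <-> x+1).  A multiset of sets is
   given by its multiplicity function m : {set 'I_n} -> nat; the multiplicity
   of any nonempty set in a partition of {1^r..n^r} is <= r, hence the codomain
   'I_r.+1 loses nothing. *)
Definition msp (n r : nat) := {ffun {set 'I_n} -> 'I_r.+1}.

Definition is_msp n r (m : msp n r) : bool :=
  (nat_of_ord (m set0) == 0%N) &&
  [forall x : 'I_n, (\sum_(S : {set 'I_n} | x \in S) nat_of_ord (m S))%N == r].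

Definition a_i n r (m : msp n r) (i : nat) : nat :=
  #|[set S : {set 'I_n} | nat_of_ord (m S) == i]|.

Definition exps_of n r (m : msp n r) : expo r := [ffun k : 'I_r => a_i m k.+1].

Definition P (r n : nat) : mpoly r := fun e =>
  (#|[set m : msp n r | is_msp m && (exps_of m == e)]|)%:R.

Arguments P r n : clear implicits.

(* exponent vector of z_k  (k = 0 gives the zero vector, since z_0 = 1) *)
Definition unit_expo r (k : nat) : expo r :=
  [ffun t : 'I_r => nat_of_bool (t.+1 == k)%N].
Definition expo_add r (a b : expo r) : expo r := [ffun t => (a t + b t)%N].
Definition expo_sub r (a b : expo r) : expo r := [ffun t => (a t - b t)%N].
Definition expo_le r (a b : expo r) : bool := [forall t, (a t <= b t)%N].

Definition mulmono r (a : expo r) (f : mpoly r) : mpoly r := fun e =>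
  if expo_le a e then f (expo_sub e a) else 0.
(* partial derivative D_(k+1) = d/dz_(k+1) *)
Definition deriv r (k : 'I_r) (f : mpoly r) : mpoly r := fun e =>
  (e k).+1%:R * f (expo_add e (unit_expo r k.+1)).

(* ---------- scenarios ----------
   T = (c0, mu) with mu (i,j) = m_(j+1)(lambda_(i+1)) (0-indexed i, j);
   parts of lambda_(i+1) are at most i+1, i.e. mu (i,j) = 0 when j > i. *)
Definition scen r := ('I_r.+1 * {ffun 'I_r * 'I_r -> 'I_r.+1})%type.

Definition is_scen r (T : scen r) : bool :=
  [forall i : 'I_r, forall j : 'I_r, (i < j)%N ==> (nat_of_ord (T.2 (i, j)) == 0%N)] &&
  ((nat_of_ord T.1 + \sum_(ij : 'I_r * 'I_r) (ij.2.+1 * nat_of_ord (T.2 ij)))%N == r).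

(* exponent of z_{c0} * prod_{i,j} (z_j z_{i-j})^{m_j(lambda_i)} *)
Definition scen_mono r (T : scen r) : expo r :=
  [ffun t : 'I_r => (unit_expo r T.1 t +
     \sum_(ij : 'I_r * 'I_r) nat_of_ord (T.2 ij) *
        (unit_expo r ij.2.+1 t + unit_expo r (ij.1 - ij.2) t))%N].

Definition scen_coef r (T : scen r) : rat :=
  \prod_(ij : 'I_r * 'I_r) ((nat_of_ord (T.2 ij))`!%:R)^-1.

Definition scen_len r (T : scen r) (i : 'I_r) : nat :=
  (\sum_(j : 'I_r) nat_of_ord (T.2 (i, j)))%N.

Definition derivs r (T : scen r) (f : mpoly r) : mpoly r :=
  foldr (fun i g => iter (scen_len T i) (deriv i) g) f (enum 'I_r).

Definition PT r (T : scen r) (f : mpoly r) : mpoly r := fun e =>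
  scen_coef T * mulmono (scen_mono T) (derivs T f) e.

Definition Dop r (f : mpoly r) : mpoly r := fun e =>
  \sum_(T : scen r | is_scen T) PT T f e.

(* evaluation at z_1 = ... = z_r = 1 for polynomials whose exponents are all
   at most 2^n (true for P^(r)_n, as a_i(pi) <= number of subsets = 2^n). *)
Definition eval_ones r n (f : mpoly r) : rat :=
  \sum_(e : {ffun 'I_r -> 'I_(2 ^ n).+1}) f [ffun t => nat_of_ord (e t)].

From Pilot Require Import Defs.
From HB Require Import structures.
From mathcomp Require Import all_boot all_order all_algebra.
Set Implicit Arguments. Unset Strict Implicit. Unset Printing Implicit Defensive.
Import GRing.Theory Num.Theory.

(* A multiset set-partition m' of {1^r,..,(n+1)^r} is determined by the pair
   (m, J) where m is obtained by deleting the new element n+1 from every block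
   (m(S) = m'(S) + m'(S u {n+1}) for S nonempty) and J(S) = m'(S u {n+1})
   records how many of the m(S) copies of S receive n+1; the singleton
   {n+1} then occurs r - sum_S J(S) times.  The "scenario" of (m, J) is c_0 =
   r - sum_S J(S) together with mu(i,j) = #{S : m(S) = i+1, J(S) = j+1}; it
   determines how the exponent vector changes from m to m' (the monomial
   factor and the shifts of the D_i), and, for fixed m, the number of J with a
   prescribed scenario mu is  prod_i a_i(m)^(falling ell_i) / prod mu(i,j)!,
   exactly the coefficient produced by the derivatives in P[T]. *)

Section GroundSetExtension.
Variable k : nat.

Definition old (x : 'I_k) : 'I_k.+1 := lift ord_max x.
Definition ext (S : {set 'I_k}) : {set 'I_k.+1} := old @: S.
Definition extN (S : {set 'I_k}) : {set 'I_k.+1} := ord_max |: ext S.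
Definition trace (X : {set 'I_k.+1}) : {set 'I_k} := [set x | old x \in X].

Lemma old_inj : injective old. Proof. exact: lift_inj. Qed.

Lemma old_neq_max (x : 'I_k) : (old x == ord_max) = false.
Proof. by apply/negbTE; rewrite eq_sym; exact: neq_lift. Qed.

Lemma mem_ext S x : (old x \in ext S) = (x \in S).
Proof. by rewrite /ext mem_imset //; exact: old_inj. Qed.

Lemma max_ext S : (ord_max \in ext S) = false.
Proof. by apply/negbTE/imsetP => -[x _ /esym/eqP]; rewrite old_neq_max. Qed.

Lemma max_extN S : ord_max \in extN S.
Proof. exact: setU11. Qed.

Lemma mem_extN S x : (old x \in extN S) = (x \in S).
Proof. by rewrite /extN in_setU1 mem_ext old_neq_max. Qed.

Lemma traceK_ext S : trace (ext S) = S.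
Proof. by apply/setP => x; rewrite inE mem_ext. Qed.

Lemma traceK_extN S : trace (extN S) = S.
Proof. by apply/setP => x; rewrite inE mem_extN. Qed.

Lemma old_or_max (y : 'I_k.+1) : y = ord_max \/ exists x, y = old x.
Proof. by case: (unliftP ord_max y) => [j ->|->]; [right; exists j | left]. Qed.

Lemma ext_trace (X : {set 'I_k.+1}) : ord_max \notin X -> ext (trace X) = X.
Proof.
move=> hX; apply/setP => y; case: (old_or_max y) => [->|[x ->]].
  by rewrite max_ext (negbTE hX).
by rewrite mem_ext inE.
Qed.

Lemma extN_trace (X : {set 'I_k.+1}) : ord_max \in X -> extN (trace X) = X.
Proof.
move=> hX; apply/setP => y; case: (old_or_max y) => [->|[x ->]].
  by rewrite max_extN hX.
by rewrite mem_extN inE.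
Qed.

Lemma ext_neq_extN S : ext S != extN S.
Proof. by apply/eqP => h; move: (max_extN S); rewrite -h max_ext. Qed.

Lemma ext0 : ext set0 = set0.
Proof. exact: imset0. Qed.

Lemma sum_subsets_split (F : {set 'I_k.+1} -> nat) :
  \sum_X F X = \sum_S F (ext S) + \sum_S F (extN S).
Proof.
rewrite (bigID (fun X : {set 'I_k.+1} => ord_max \in X)) /= addnC; congr (_ + _).
  rewrite (reindex_onto ext trace) /=; last by move=> X; exact: ext_trace.
  by apply: eq_bigl => S; rewrite max_ext traceK_ext eqxx.
rewrite (reindex_onto extN trace) /=; last by move=> X; exact: extN_trace.
by apply: eq_bigl => S; rewrite max_extN traceK_extN eqxx.
Qed.

End GroundSetExtension.

Lemma card_set_indicator (T : finType) (p : pred T) :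
  #|[set x | p x]| = \sum_x (p x : nat).
Proof. by rewrite -sum1_card big_mkcond /=; apply: eq_bigr => x _; rewrite inE; case: (p x). Qed.

Lemma eq_S_inord n (i : 'I_n.+1) x : (0 < x)%N -> (x <= n.+1)%N ->
  (x == i.+1) = (i == inord x.-1).
Proof.
move=> x0 xn; rewrite -val_eqE /= inordK; last by rewrite prednK.
by rewrite -{1}(prednK x0) eqSS eq_sym.
Qed.

(* U is a finite set whose elements u carry a weight m u in
   1..r (0 is allowed and never counted). *)
Section Markings.
Variables (U : finType) (r' : nat) (m : U -> nat).
Local Notation r := r'.+1.
Hypothesis m_le : forall u, m u <= r.

Definition profile (J : U -> nat) (ij : 'I_r * 'I_r) : nat :=
  #|[set u | (m u == ij.1.+1) && (J u == ij.2.+1)]|.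

Lemma sum_profile (J : U -> nat) (J_le : forall u, J u <= m u) (g : 'I_r * 'I_r -> nat) :
  \sum_ij profile J ij * g ij =
  \sum_u (if J u == 0 then 0 else g (inord (m u).-1, inord (J u).-1)).
Proof.
under eq_bigr do rewrite /profile card_set_indicator big_distrl /=.
rewrite exchange_big /=; apply: eq_bigr => u _.
case: eqP => [J0|/eqP Jn0]; first by rewrite big1 // => ij _; rewrite J0 andbF.
have Jpos : 0 < J u by rewrite lt0n.
have mpos : 0 < m u by apply: leq_trans (J_le u).
have Jr : J u <= r by apply: leq_trans (m_le u).
rewrite (bigD1 (inord (m u).-1, inord (J u).-1)) //= big1.
  by rewrite (eq_S_inord _ mpos (m_le u)) (eq_S_inord _ Jpos Jr) !eqxx mul1n addn0.
case=> i j /=; rewrite xpair_eqE => /negbTE hn.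
by rewrite (eq_S_inord _ mpos (m_le u)) (eq_S_inord _ Jpos Jr) hn.
Qed.

Lemma sum_profile_row (J : U -> nat) (J_le : forall u, J u <= m u) (t : 'I_r) :
  \sum_j profile J (t, j) = \sum_u ((m u == t.+1) && (J u != 0)).
Proof.
under eq_bigr do rewrite /profile card_set_indicator.
rewrite exchange_big /=; apply: eq_bigr => u _.
case: (m u =P t.+1) => /= hmu; last by rewrite big1.
case: eqP => [J0|/eqP Jn0]; first by rewrite big1 // => j _; rewrite J0.
have Jpos : 0 < J u by rewrite lt0n.
have Jr : J u <= r by apply: leq_trans (m_le u).
rewrite (bigD1 (inord (J u).-1)) //= big1; first by rewrite (eq_S_inord _ Jpos Jr) eqxx.
by move=> j /negbTE hn; rewrite (eq_S_inord _ Jpos Jr) hn.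
Qed.

Definition marking (mu : 'I_r * 'I_r -> nat) (J : {ffun U -> 'I_r.+1}) : bool :=
  [forall u, J u <= m u] && [forall ij, profile (fun u => J u) ij == mu ij].

Definition weight_class (i : 'I_r) : nat := #|[set u | m u == i.+1]|.
Definition row_len (mu : 'I_r * 'I_r -> nat) (i : 'I_r) : nat := \sum_j mu (i, j).

Definition pointed_marked mu (ij0 : 'I_r * 'I_r) :=
  [set p : {ffun U -> 'I_r.+1} * U |
    marking mu p.1 && (m p.2 == ij0.1.+1) && (p.1 p.2 == ij0.2.+1 :> nat)].
Definition pointed_unmarked mu (i0 : 'I_r) :=
  [set p : {ffun U -> 'I_r.+1} * U |
    marking mu p.1 && (m p.2 == i0.+1) && (p.1 p.2 == 0 :> nat)].

Lemma card_pointed_marked mu (ij0 : 'I_r * 'I_r) :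
  #|pointed_marked mu ij0| = #|[set J | marking mu J]| * mu ij0.
Proof.
rewrite /pointed_marked [LHS]card_set_indicator.
transitivity (\sum_(J : {ffun U -> 'I_r.+1}) \sum_u
   (marking mu J && (m u == ij0.1.+1) && (J u == ij0.2.+1 :> nat) : nat)).
  by rewrite pair_bigA.
rewrite -sum_nat_const [RHS]big_mkcond; apply: eq_bigr => J _; rewrite inE.
case g: (marking mu J) => /=; last by rewrite big1.
by move/andP: g => [_ /forallP /(_ ij0) /eqP <-]; rewrite /profile card_set_indicator.
Qed.

Lemma card_pointed_unmarked mu (i0 : 'I_r) :
  #|pointed_unmarked mu i0| = #|[set J | marking mu J]| * (weight_class i0 - row_len mu i0).
Proof.
rewrite /pointed_unmarked [LHS]card_set_indicator.
transitivity (\sum_(J : {ffun U -> 'I_r.+1}) \sum_u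
   (marking mu J && (m u == i0.+1) && (J u == 0 :> nat) : nat)).
  by rewrite pair_bigA.
rewrite -sum_nat_const [RHS]big_mkcond; apply: eq_bigr => J _; rewrite inE.
case g: (marking mu J) => /=; last by rewrite big1.
move/andP: g => [/forallP hle /forallP hc].
have -> : row_len mu i0 = \sum_u ((m u == i0.+1) && (J u != 0 :> nat)).
  by rewrite -sum_profile_row // /row_len; apply: eq_bigr => j _; move/eqP: (hc (i0, j)).
have -> : weight_class i0 = \sum_u ((m u == i0.+1) && (J u == 0 :> nat)) +
                           \sum_u ((m u == i0.+1) && (J u != 0 :> nat)).
  rewrite -big_split /weight_class card_set_indicator; apply: eq_bigr => u _.
  by case: (m u == i0.+1); case: (J u == 0 :> nat).
by rewrite addnK.
Qed.

Definition remark (J : {ffun U -> 'I_r.+1}) (u : U) (v : 'I_r.+1) : {ffun U -> 'I_r.+1} :=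
  [ffun w => if w == u then v else J w].

Lemma profile_remark J u v ij :
  profile (fun w => remark J u v w) ij + ((m u == ij.1.+1) && (J u == ij.2.+1 :> nat)) =
  profile (fun w => J w) ij + ((m u == ij.1.+1) && (v == ij.2.+1 :> nat)).
Proof.
rewrite /profile !card_set_indicator (bigD1 u) //= [in RHS](bigD1 u) //= ffunE eqxx.
rewrite (eq_bigr (fun w => ((m w == ij.1.+1) && (J w == ij.2.+1 :> nat) : nat))); last first.
  by move=> w /negbTE hw; rewrite ffunE hw.
by rewrite addnAC [RHS]addnAC [_ + (_ && _ : nat)]addnC.
Qed.

Definition decr (mu : 'I_r * 'I_r -> nat) (ij0 : 'I_r * 'I_r) (ij : 'I_r * 'I_r) : nat :=
  mu ij - (ij == ij0).

Lemma eq_pair_S (i j i0 j0 : 'I_r) :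
  ((i0.+1 == i.+1) && (j0.+1 == j.+1)) = ((i, j) == (i0, j0)).
Proof. by rewrite !eqSS xpair_eqE (eq_sym i) (eq_sym j). Qed.

(* Erasing the mark of the distinguished element is a bijection between the
   two kinds of pointed markings, for the profiles mu and decr mu (i0, j0). *)
Lemma card_pointed_bij mu (i0 j0 : 'I_r) (hji : j0 <= i0) (hpos : 0 < mu (i0, j0)) :
  #|pointed_marked mu (i0, j0)| = #|pointed_unmarked (decr mu (i0, j0)) i0|.
Proof.
pose erase := fun p : {ffun U -> 'I_r.+1} * U => (remark p.1 p.2 ord0, p.2).
pose mark := fun p : {ffun U -> 'I_r.+1} * U => (remark p.1 p.2 (inord j0.+1), p.2).
have j0r : j0.+1 < r.+1 by rewrite ltnS ltn_ord.
have erase_in p : p \in pointed_marked mu (i0, j0) ->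
    erase p \in pointed_unmarked (decr mu (i0, j0)) i0.
  case: p => J u; rewrite !inE /= => /andP [/andP [/andP [/forallP hle /forallP hc] hmu] hJu].
  rewrite hmu ffunE eqxx /= !andbT /marking.
  have -> : [forall w, remark J u ord0 w <= m w].
    by apply/forallP => w; rewrite ffunE; case: (w == u) => //; exact: hle.
  rewrite /=; apply/forallP => -[i j]; have := profile_remark J u ord0 (i, j).
  rewrite /decr -(eqP (hc (i, j))) (eqP hmu) (eqP hJu) /= eq_pair_S andbF addn0 => <-.
  by rewrite addnK.
have mark_in p : p \in pointed_unmarked (decr mu (i0, j0)) i0 ->
    mark p \in pointed_marked mu (i0, j0).
  case: p => J u; rewrite !inE /= => /andP [/andP [/andP [/forallP hle /forallP hc] hmu] hJu].
  rewrite hmu ffunE eqxx inordK // /= eqxx !andbT /marking.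
  have -> : [forall w, remark J u (inord j0.+1) w <= m w].
    apply/forallP => w; rewrite ffunE; case: eqP => [->|_]; last exact: hle.
    by rewrite inordK // (eqP hmu) ltnS.
  rewrite /=; apply/forallP => -[i j]; have := profile_remark J u (inord j0.+1) (i, j).
  rewrite (eqP hmu) (eqP hJu) inordK // /= eq_pair_S andbF addn0 (eqP (hc (i, j))) => h.
  apply/eqP; move: h; rewrite /decr; case: eqP => [[-> ->]|_]; last by rewrite !subn0 addn0.
  by rewrite subn1 addn1 prednK.
have mark_erase : {in pointed_marked mu (i0, j0), cancel erase mark}.
  case=> J u; rewrite inE => /andP [_ hJu]; congr pair; apply/ffunP => w.
  by rewrite !ffunE; case: eqP => // ->; apply: val_inj; rewrite /= inordK // (eqP hJu).
have erase_mark : {in pointed_unmarked (decr mu (i0, j0)) i0, cancel mark erase}.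
  case=> J u; rewrite inE => /andP [_ hJu]; congr pair; apply/ffunP => w.
  by rewrite !ffunE; case: eqP => // ->; apply: val_inj; rewrite /= (eqP hJu).
have <- : erase @: pointed_marked mu (i0, j0) = pointed_unmarked (decr mu (i0, j0)) i0.
  apply/setP => p; apply/imsetP/idP => [[q hq ->]|hp]; first exact: erase_in.
  by exists (mark p); [exact: mark_in | rewrite erase_mark].
by rewrite card_in_imset //; exact: can_in_inj mark_erase.
Qed.

Lemma decr_sum mu ij0 : 0 < mu ij0 -> \sum_ij mu ij = (\sum_ij decr mu ij0 ij).+1.
Proof.
move=> hpos; rewrite (bigD1 ij0) //= [in RHS](bigD1 ij0) //= /decr eqxx subn1 -addSn prednK //.
by congr (_ + _); apply: eq_bigr => ij /negbTE ->; rewrite subn0.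
Qed.

Lemma decr_prod_fact mu ij0 : 0 < mu ij0 ->
  \prod_ij (mu ij)`! = mu ij0 * \prod_ij (decr mu ij0 ij)`!.
Proof.
move=> hpos; rewrite (bigD1 ij0) //= [in RHS](bigD1 ij0) //= /decr eqxx subn1 mulnA.
rewrite -{1}(prednK hpos) factS prednK //; congr (_ * _).
by apply: eq_bigr => ij /negbTE ->; rewrite subn0.
Qed.

Lemma decr_prod_ffact mu (i0 j0 : 'I_r) : 0 < mu (i0, j0) ->
  \prod_i (weight_class i) ^_ (row_len mu i) =
  (weight_class i0 - row_len (decr mu (i0, j0)) i0) *
  \prod_i (weight_class i) ^_ (row_len (decr mu (i0, j0)) i).
Proof.
move=> hpos.
have len_i0 : row_len mu i0 = (row_len (decr mu (i0, j0)) i0).+1.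
  rewrite /row_len (bigD1 j0) //= [in RHS](bigD1 j0) //= /decr eqxx subn1 -addSn prednK //.
  by congr (_ + _); apply: eq_bigr => j hj; rewrite xpair_eqE eqxx (negbTE hj) subn0.
rewrite (bigD1 i0) //= [in RHS](bigD1 i0) //= len_i0 ffactnSr mulnA [_ * (_ - _)]mulnC.
congr (_ * _); apply: eq_bigr => i hi; congr (_ ^_ _); apply: eq_bigr => j _.
by rewrite /decr xpair_eqE (negbTE hi) subn0.
Qed.

Lemma card_markings0 mu : (forall ij, mu ij = 0) -> #|[set J | marking mu J]| = 1.
Proof.
move=> mu0; apply/eqP/cards1P; exists [ffun _ => ord0]; apply/setP => J; rewrite !inE.
apply/idP/eqP => [/andP [/forallP hle /forallP hc]|->].
  apply/ffunP => u; rewrite ffunE; apply: val_inj => /=; apply/eqP/negPn/negP => Jn0.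
  have Jpos : 0 < J u by rewrite lt0n.
  have mpos : 0 < m u := leq_trans Jpos (hle u).
  have Jr : J u <= r := leq_trans (hle u) (m_le u).
  move: (hc (inord (m u).-1, inord (J u).-1)); rewrite mu0 /profile cards_eq0.
  move=> /eqP/setP/(_ u); rewrite !inE /=.
  by rewrite (eq_S_inord _ mpos (m_le u)) (eq_S_inord _ Jpos Jr) !eqxx.
apply/andP; split; first by apply/forallP => u; rewrite ffunE.
by apply/forallP => ij; rewrite mu0 /profile cards_eq0; apply/eqP/setP => u; rewrite !inE ffunE andbF.
Qed.

Theorem card_markings mu : (forall i j : 'I_r, i < j -> mu (i, j) = 0) ->
  #|[set J | marking mu J]| * \prod_ij (mu ij)`! =
  \prod_i (weight_class i) ^_ (row_len mu i).
Proof.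
move: {2}(\sum_ij mu ij) (erefl (\sum_ij mu ij)) => s.
elim: s mu => [|s IH] mu hs hmu.
  have mu0 ij : mu ij = 0 by apply/eqP; rewrite -leqn0 -hs (bigD1 ij) //= leq_addr.
  rewrite card_markings0 // big1 ?mul1n => [|ij _]; last by rewrite mu0.
  by rewrite big1 // => i _; rewrite /row_len big1 ?ffactn0 // => j _; rewrite mu0.
have [[i0 j0] hpos] : exists ij0, 0 < mu ij0.
  apply/existsP; apply: contraT; rewrite negb_exists => /forallP mu0.
  by move: hs; rewrite big1 => // ij _; apply/eqP; rewrite -leqn0 leqNgt mu0.
have hji : j0 <= i0 by rewrite leqNgt; apply/negP => h; rewrite hmu in hpos.
have hmu' (i j : 'I_r) : i < j -> decr mu (i0, j0) (i, j) = 0 by move=> h; rewrite /decr hmu.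
have IHdecr := IH _ (succn_inj (etrans (esym (decr_sum hpos)) hs)) hmu'.
rewrite (decr_prod_fact hpos) (decr_prod_ffact hpos) -IHdecr !mulnA [(_ - _) * _]mulnC.
by rewrite -card_pointed_marked card_pointed_bij // card_pointed_unmarked.
Qed.

End Markings.

Section Glue.
Variables (k r' : nat).
Local Notation r := r'.+1.
Local Notation markT := {ffun {set 'I_k} -> 'I_r.+1}.

Definition total (J : markT) : nat := \sum_S (J S : nat).
Definition n_single (J : markT) : 'I_r.+1 := inord (r - total J).

Definition glue (p : msp k r * markT) : msp k.+1 r :=
  [ffun X : {set 'I_k.+1} => if ord_max \in X then
     (if trace X == set0 then n_single p.2 else p.2 (trace X))
   else inord (p.1 (trace X) - p.2 (trace X))].

Definition admissible (p : msp k r * markT) : bool :=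
  is_msp p.1 && [forall S, p.2 S <= p.1 S] && (total p.2 <= r).

Lemma glue_ext p S : (glue p (ext S) : nat) = p.1 S - p.2 S.
Proof.
rewrite ffunE max_ext traceK_ext inordK // ltnS.
exact: leq_trans (leq_subr _ _) (leq_ord _).
Qed.

Lemma glue_extN p S :
  (glue p (extN S) : nat) = if S == set0 then r - total p.2 else p.2 S.
Proof.
by rewrite ffunE max_extN traceK_extN; case: eqP => // _; rewrite inordK // ltnS leq_subr.
Qed.

Lemma admissible_mark0 p : admissible p -> p.2 set0 = 0 :> nat.
Proof.
case/andP => /andP [/andP [/eqP h0 _] /forallP hle] _.
by apply/eqP; rewrite -leqn0 -h0 hle.
Qed.

Lemma total_nonempty (J : markT) : J set0 = 0 :> nat ->
  \sum_(S | S != set0) (J S : nat) = total J.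
Proof. by move=> h; rewrite /total [in RHS](bigD1 set0) //= h. Qed.

Lemma is_msp_glue p : admissible p -> is_msp (glue p).
Proof.
move=> hp; have J0 := admissible_mark0 hp.
move: hp => /andP [/andP [/andP [/eqP m0 /forallP hm] /forallP hle] hs].
apply/andP; split; first by rewrite -(ext0 k) glue_ext m0.
apply/forallP => y; rewrite big_mkcond sum_subsets_split /=.
case: (old_or_max y) => [->|[x ->]].
  rewrite big1 => [|S _]; last by rewrite max_ext.
  rewrite add0n (eq_bigr (fun S : {set 'I_k} => if S == set0 then r - total p.2 else p.2 S)); last first.
    by move=> S _; rewrite max_extN glue_extN.
  rewrite (bigD1 set0) //= eqxx (eq_bigr (fun S : {set 'I_k} => p.2 S : nat)) => [|S /negbTE -> //].
  by rewrite total_nonempty // subnK.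
rewrite (eq_bigr (fun S : {set 'I_k} => if x \in S then p.1 S - p.2 S else 0)); last first.
  by move=> S _; rewrite mem_ext glue_ext.
rewrite [X in _ + X](eq_bigr (fun S : {set 'I_k} => if x \in S then (p.2 S : nat) else 0)); last first.
  move=> S _; rewrite mem_extN glue_extN; case hx: (x \in S) => //.
  by case: eqP => // h; rewrite h inE in hx.
rewrite -big_split /=; apply/eqP.
transitivity (\sum_(S : {set 'I_k} | x \in S) (p.1 S : nat)); last exact/eqP/hm.
rewrite [RHS]big_mkcond /=; apply/eq_bigr => S _.
by case: (x \in S) => //; rewrite subnK // hle.
Qed.

Definition unglue (m' : msp k.+1 r) : msp k r * markT :=
  ([ffun S : {set 'I_k} => if S == set0 then ord0 else inord (m' (ext S) + m' (extN S))],
   [ffun S : {set 'I_k} => if S == set0 then ord0 else m' (extN S)]).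

Lemma msp_pair_bound (m' : msp k.+1 r) S : is_msp m' -> S != set0 ->
  m' (ext S) + m' (extN S) <= r.
Proof.
move=> /andP [_ /forallP hm] /set0Pn [x hx].
apply: (leq_trans _ (eq_leq (eqP (hm (old x))))).
rewrite (bigD1 (ext S)) ?mem_ext //= (bigD1 (extN S)) /=; first by rewrite addnA leq_addr.
by rewrite mem_extN hx eq_sym ext_neq_extN.
Qed.

Lemma unglue1 (m' : msp k.+1 r) S : is_msp m' -> S != set0 ->
  ((unglue m').1 S : nat) = m' (ext S) + m' (extN S).
Proof. by move=> hm hS; rewrite ffunE (negbTE hS) inordK // ltnS msp_pair_bound. Qed.

Lemma unglue_total (m' : msp k.+1 r) : is_msp m' ->
  total (unglue m').2 + m' (extN set0) = r.
Proof.
move=> /andP [_ /forallP hm].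
transitivity (\sum_(X : {set 'I_k.+1} | ord_max \in X) (m' X : nat)); last exact/eqP/hm.
rewrite big_mkcond sum_subsets_split /= big1 ?add0n => [|S _]; last by rewrite max_ext.
rewrite (bigD1 set0) //= max_extN addnC; congr (_ + _).
rewrite /total (bigD1 set0) //= ffunE eqxx add0n.
by apply: eq_bigr => S /negbTE hS; rewrite ffunE hS max_extN.
Qed.

Lemma admissible_unglue (m' : msp k.+1 r) : is_msp m' -> admissible (unglue m').
Proof.
move=> hm; have hs := unglue_total hm.
apply/andP; split; last exact: leq_trans (leq_addr _ _) (eq_leq hs).
apply/andP; split; last first.
  apply/forallP => S; case: (S =P set0) => [->|/eqP hS]; first by rewrite !ffunE eqxx.
  by rewrite unglue1 // ffunE (negbTE hS) leq_addl.
apply/andP; split; first by rewrite ffunE eqxx.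
apply/forallP => x.
transitivity (\sum_(S : {set 'I_k} | x \in S) (m' (ext S) + m' (extN S)) == r).
  congr (_ == _); apply: eq_bigr => S hx; apply: unglue1 => //.
  by apply/set0Pn; exists x.
move: hm => /andP [_ /forallP hm]; apply/eqP.
transitivity (\sum_(X : {set 'I_k.+1} | old x \in X) (m' X : nat)); last exact/eqP/hm.
rewrite [in RHS]big_mkcond sum_subsets_split /= -big_split big_mkcond /=.
by apply/eq_bigr => S _; rewrite mem_ext mem_extN; case: (x \in S).
Qed.

Lemma unglueK (m' : msp k.+1 r) : is_msp m' -> glue (unglue m') = m'.
Proof.
move=> hm; have hs := unglue_total hm.
apply/ffunP => X; apply: val_inj; rewrite ffunE /=.
case hX: (ord_max \in X); last first.
  have eX := ext_trace (negbT hX).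
  case: (trace X =P set0) => [h0|/eqP h0].
    rewrite !ffunE h0 eqxx /= inordK // -eX h0 ext0.
    by move: hm => /andP [/eqP -> _].
  by rewrite unglue1 // ffunE (negbTE h0) addnK inordK ?eX.
have eX := extN_trace hX.
case: eqP => [h0|/eqP h0]; last by rewrite ffunE (negbTE h0) eX.
have hs' : r - total (unglue m').2 = m' (extN set0).
  apply/eqP; rewrite -(eqn_add2l (total (unglue m').2)) subnKC; first by rewrite hs.
  exact: leq_trans (leq_addr _ _) (eq_leq hs).
by rewrite /n_single inordK ?ltnS ?leq_subr // hs' -h0 eX.
Qed.

Lemma glue_inj : {in [set p | admissible p] &, injective glue}.
Proof.
move=> p q; rewrite !inE => hp hq e.
have J0p := admissible_mark0 hp; have J0q := admissible_mark0 hq.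
move: hp hq => /andP [/andP [_ /forallP hlep] _] /andP [/andP [_ /forallP hleq] _].
have e2 : p.2 = q.2.
  apply/ffunP => S; apply: val_inj => /=.
  case: (S =P set0) => [->|/eqP hS]; first by rewrite J0p J0q.
  by move: (glue_extN p S) (glue_extN q S); rewrite e (negbTE hS) => -> ->.
have e1 : p.1 = q.1.
  apply/ffunP => S; apply: val_inj => /=.
  move: (glue_ext p S) (glue_ext q S); rewrite e => -> h.
  by rewrite -(subnK (hlep S)) h e2 subnK // -e2.
by case: p q e1 e2 {e hlep hleq J0p J0q} => [? ?] [? ?] /= -> ->.
Qed.

Lemma sum_msp_glue (Pr : pred (msp k.+1 r)) :
  \sum_(m' | is_msp m') (Pr m' : nat) = \sum_(p | admissible p) (Pr (glue p) : nat).
Proof.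
rewrite (eq_bigl (mem (glue @: [set p | admissible p]))); last first.
  move=> m'; apply/idP/imsetP => [hm|[p hp ->]].
    by exists (unglue m'); [rewrite inE admissible_unglue | rewrite unglueK].
  by rewrite inE in hp; rewrite /= is_msp_glue.
rewrite big_imset /=; last exact: glue_inj.
by apply: eq_bigl => p; rewrite inE.
Qed.

(* The scenario of a pair (m, J): c0 = multiplicity of the new singleton and
   mu(i,j) = number of blocks of multiplicity i+1 receiving the new element
   j+1 times (the parts j+1 of lambda_(i+1)). *)
Definition mult_of (p : msp k r * markT) (S : {set 'I_k}) : nat := p.1 S.
Definition mark_of (p : msp k r * markT) (S : {set 'I_k}) : nat := p.2 S.

Lemma mult_of_le p S : mult_of p S <= r. Proof. exact: leq_ord. Qed.

Lemma mark_of_le p : admissible p -> forall S, mark_of p S <= mult_of p S.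
Proof. by case/andP => /andP [_ /forallP h] _. Qed.

Definition scenario_of (p : msp k r * markT) : scen r :=
  (n_single p.2, [ffun ij : 'I_r * 'I_r => inord (@profile _ r' (mult_of p) (mark_of p) ij)]).

Lemma profile_le p : admissible p -> forall ij : 'I_r * 'I_r, profile (mult_of p) (mark_of p) ij <= r.
Proof.
move=> hp ij; apply: leq_trans _ (let: conj _ h := andP hp in h).
rewrite /profile card_set_indicator /total; apply: leq_sum => S _.
by case/boolP: (_ && _) => //= /andP [_ /eqP]; rewrite /mark_of => ->.
Qed.

Lemma scenario_of2 p (ij : 'I_r * 'I_r) : admissible p ->
  ((scenario_of p).2 ij : nat) = profile (mult_of p) (mark_of p) ij.
Proof. by move=> hp; rewrite ffunE inordK // ltnS profile_le. Qed.

Lemma sum_profile_total (m : msp k r) (J : markT) : [forall S, J S <= m S] ->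
  \sum_(ij : 'I_r * 'I_r) profile (fun S => (m S : nat)) (fun S => (J S : nat)) ij * ij.2.+1
  = total J.
Proof.
move=> /forallP hle; rewrite (sum_profile (fun S => leq_ord (m S)) hle) /total.
apply: eq_bigr => S _; case: eqP => [-> //|/eqP h].
have Jr : (J S : nat) <= r by apply: leq_trans (hle S) (leq_ord _).
by rewrite inordK ?prednK ?lt0n // (leq_trans _ Jr) // prednK ?lt0n.
Qed.

Lemma is_scen_scenario p : admissible p -> is_scen (scenario_of p).
Proof.
move=> hp; apply/andP; split.
  apply/forallP => i; apply/forallP => j; apply/implyP => hij.
  rewrite scenario_of2 // /profile cards_eq0; apply/eqP/setP => S; rewrite !inE /=.
  apply/negbTE/negP => /andP [/eqP hm /eqP hj]; move: (mark_of_le hp S).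
  by rewrite hm hj ltnS leqNgt hij.
have -> : \sum_(ij : 'I_r * 'I_r) ij.2.+1 * ((scenario_of p).2 ij : nat) = total p.2.
  rewrite -(@sum_profile_total p.1); last by case/andP: hp => /andP [].
  by apply: eq_bigr => ij _; rewrite scenario_of2 // mulnC.
by rewrite /= /n_single inordK ?ltnS ?leq_subr // subnK //; case/andP: hp.
Qed.

(* Exponent vector of the new partition: a_i drops by ell_i (blocks of
   multiplicity i that receive the new element) and gains the exponents of the
   scenario monomial. *)
Definition next_expo (m : msp k r) (T : scen r) : expo r :=
  [ffun t => exps_of m t - scen_len T t + scen_mono T t].

Lemma scen_len_scenario p t : admissible p ->
  scen_len (scenario_of p) t = \sum_S ((mult_of p S == t.+1) && (mark_of p S != 0)).
Proof.
move=> hp; rewrite /scen_len -(sum_profile_row (@mult_of_le p) (mark_of_le hp)).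
by apply: eq_bigr => j _; exact: scenario_of2.
Qed.

(* Each block S of multiplicity i receiving j >= 1 copies of the new element
   contributes z_j (the copies S u {new}) and z_(i-j) (the remaining copies). *)
Lemma scen_mono_scenario p t : admissible p ->
  scen_mono (scenario_of p) t = (t.+1 == r - total p.2) +
    (\sum_S (mark_of p S == t.+1) +
     \sum_S ((mark_of p S != 0) && (mult_of p S - mark_of p S == t.+1))).
Proof.
move=> hp; have hle := mark_of_le hp.
rewrite /scen_mono ffunE /= ffunE /n_single inordK ?ltnS ?leq_subr //; congr (_ + _).
under eq_bigr do rewrite scenario_of2 //.
rewrite (sum_profile (@mult_of_le p) hle) -big_split /=; apply: eq_bigr => S _.
case: eqP => [-> //|/eqP h]; rewrite !ffunE.
have Jpos : 0 < mark_of p S by rewrite lt0n.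
have mpos : 0 < mult_of p S by apply: leq_trans (hle S).
have Jr : mark_of p S <= r by apply: leq_trans (hle S) (mult_of_le p S).
rewrite /= !inordK ?prednK ?mult_of_le // -subSS !prednK //.
by rewrite !(eq_sym t.+1).
Qed.

Lemma exps_glue p : admissible p -> exps_of (glue p) = next_expo p.1 (scenario_of p).
Proof.
move=> hp; have J0 := admissible_mark0 hp.
apply/ffunP => t; rewrite /next_expo [in RHS]ffunE scen_len_scenario // scen_mono_scenario //.
rewrite /exps_of !ffunE /a_i !card_set_indicator sum_subsets_split.
under eq_bigr do rewrite glue_ext.
under [X in _ + X = _]eq_bigr do rewrite glue_extN.
have split_old : \sum_S (mult_of p S - mark_of p S == t.+1) =
    \sum_S ((mult_of p S == t.+1) && (mark_of p S == 0)) +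
    \sum_S ((mark_of p S != 0) && (mult_of p S - mark_of p S == t.+1)).
  rewrite -big_split; apply: eq_bigr => S _ /=.
  by case: (mark_of p S =P 0) => [->|/eqP h] /=; rewrite ?subn0 ?andbT ?addn0 ?andbF.
have split_m : \sum_S ((p.1 S : nat) == t.+1) =
    \sum_S ((mult_of p S == t.+1) && (mark_of p S == 0)) +
    \sum_S ((mult_of p S == t.+1) && (mark_of p S != 0)).
  rewrite -big_split; apply: eq_bigr => S _ /=; rewrite /mult_of.
  by case: (_ == t.+1); case: (mark_of p S == 0).
have split_new : \sum_S ((if S == set0 then r - total p.2 else mark_of p S) == t.+1) =
    (t.+1 == r - total p.2) + \sum_S (mark_of p S == t.+1).
  rewrite (bigD1 set0) //= [in RHS](bigD1 set0) //= eqxx eq_sym /mark_of J0 add0n.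
  by congr (_ + _); apply: eq_bigr => S /negbTE ->.
rewrite split_old split_new split_m addnK -addnA; congr (_ + _).
by rewrite addnCA [X in _ + X]addnC.
Qed.

Lemma card_marks_of_scenario (m : msp k r) (T : scen r) : is_msp m -> is_scen T ->
  #|[set J : markT | [forall S, J S <= m S] && (total J <= r) && (scenario_of (m, J) == T)]| =
  #|[set J : markT | marking (fun S => (m S : nat)) (fun ij => (T.2 ij : nat)) J]|.
Proof.
move=> hm hT; apply: eq_card => J; rewrite !inE; apply/idP/idP.
  case/andP => /andP [hle hs] /eqP hT'.
  have hp : admissible (m, J) by rewrite /admissible /= hm hle hs.
  by rewrite /marking hle /=; apply/forallP => ij; rewrite -hT' scenario_of2.
move=> /andP [hle /forallP hc].
have hs : total J + T.1 = r.
  case/andP: hT => _ /eqP; apply: etrans; rewrite addnC -(sum_profile_total hle).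
  by congr (_ + _); apply: eq_bigr => ij _; rewrite mulnC (eqP (hc ij)).
have hsr : total J <= r by apply: leq_trans (leq_addr T.1 _) (eq_leq hs).
rewrite hle hsr /=; apply/eqP.
case: T hT hc hs => c0 mu hT hc hs; rewrite /scenario_of; congr pair.
  apply: val_inj; rewrite /n_single /= inordK ?ltnS ?leq_subr //; apply/eqP.
  by rewrite -(eqn_add2l (total J)) subnKC // hs.
by apply/ffunP => ij; rewrite ffunE; apply: val_inj; rewrite /= inordK (eqP (hc ij)).
Qed.

End Glue.

Section Derivatives.
Local Open Scope ring_scope.
Variable r : nat.

Definition shift (e : expo r) (i : 'I_r) (l : nat) : expo r :=
  [ffun t => (e t + (if t == i then l else 0))%N].

Lemma iter_deriv (i : 'I_r) l (f : mpoly r) (e : expo r) :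
  iter l (Defs.deriv i) f e = ((e i + l) ^_ l)%:R * f (shift e i l).
Proof.
elim: l f e => [|l IH] f e.
  rewrite /= ffactn0 mul1r; congr f; apply/ffunP => t; rewrite ffunE.
  by case: (t == i); rewrite addn0.
rewrite iterSr IH /Defs.deriv ffunE eqxx mulrA -natrM addnS ffactnS mulnC.
congr (_ * f _); apply/ffunP => t; rewrite !ffunE.
have -> : (t.+1 == i.+1) = (t == i) by [].
by case: (t == i); rewrite ?addn1 ?addnS ?addn0.
Qed.

Lemma foldr_deriv (L : 'I_r -> nat) (s : seq 'I_r) (f : mpoly r) (e : expo r) : uniq s ->
  foldr (fun i g => iter (L i) (Defs.deriv i) g) f s e =
  (\prod_(i <- s) (e i + L i) ^_ (L i))%:R *
  f (expo_add e [ffun t => if t \in s then L t else 0%N]).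
Proof.
elim: s e => [|i s IH] e /=.
  by move=> _; rewrite big_nil mul1r; congr f; apply/ffunP => t; rewrite !ffunE addn0.
case/andP => his us; rewrite iter_deriv IH // big_cons natrM mulrA.
have -> : (\prod_(j <- s) (shift e i (L i) j + L j) ^_ (L j) =
           \prod_(j <- s) (e j + L j) ^_ (L j))%N.
  apply: eq_big_seq => j hj; rewrite ffunE.
  have -> : (j == i) = false by apply/eqP => h; move: his; rewrite -h hj.
  by rewrite addn0.
congr (_ * f _); apply/ffunP => t; rewrite !ffunE in_cons.
by case: (t =P i) => [->|_] /=; rewrite ?(negbTE his) addn0.
Qed.

Lemma derivs_eq (T : scen r) (f : mpoly r) (e : expo r) :
  derivs T f e = (\prod_i (e i + scen_len T i) ^_ (scen_len T i))%:R *
                 f (expo_add e [ffun t => scen_len T t]).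
Proof.
rewrite /derivs foldr_deriv ?enum_uniq // big_enum.
by congr (_ * f _); apply/ffunP => t; rewrite !ffunE mem_enum.
Qed.

End Derivatives.

Section Recursion.
Variable r' : nat.
Local Notation r := r'.+1.

(* Matching exponents: the falling factorials prod_i a_i^(L_i) vanish unless
   L <= a, and then a - L + M = e means exactly that M <= e and a is the
   exponent e - M + L read off by the derivatives in P[T]. *)
Lemma falling_match (a M e : expo r) (L : 'I_r -> nat) :
  ((\prod_i (a i) ^_ (L i)) * ([ffun t => a t - L t + M t] == e : nat))%N =
  if expo_le M e then
    ((\prod_i ((expo_sub e M i + L i) ^_ (L i))) *
     (a == expo_add (expo_sub e M) [ffun t => L t] : nat))%N
  else 0%N.
Proof.
have match_eq : [ffun t => a t - L t + M t] == e -> [forall i, L i <= a i] ->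
    expo_le M e && (a == expo_add (expo_sub e M) [ffun t => L t]).
  move/eqP/ffunP => hn /forallP hall.
  have ht t : a t - L t + M t = e t by move: (hn t); rewrite ffunE.
  apply/andP; split; first by apply/forallP => t; rewrite -ht leq_addl.
  by apply/eqP/ffunP => t; rewrite !ffunE -ht addnK subnK.
case H: (expo_le M e && (a == expo_add (expo_sub e M) [ffun t => L t])).
  move/andP: H => [hle /eqP ha]; rewrite hle ha eqxx muln1.
  have -> : [ffun t => expo_add (expo_sub e M) [ffun t => L t] t - L t + M t] == e.
    by apply/eqP/ffunP => t; rewrite !ffunE addnK subnK //; exact: (forallP hle t).
  by rewrite muln1; apply: eq_bigr => i _; rewrite !ffunE.
rewrite (_ : (if expo_le M e then _ else 0%N) = 0%N); last first.
  by case: ifP => // hle; move: H; rewrite hle /= => ->; rewrite muln0.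
case hall: [forall i, L i <= a i]; last first.
  move/negbT/forallPn: hall => [i]; rewrite -ltnNge => hi.
  by rewrite (bigD1 i) //= ffact_small // mul0n.
case hn: ([ffun t => a t - L t + M t] == e); last by rewrite muln0.
by move: (match_eq hn hall); rewrite H.
Qed.

Local Open Scope ring_scope.

Lemma scen_coefK (T : scen r) : scen_coef T * (\prod_ij (T.2 ij)`!)%:R = 1 :> rat.
Proof.
rewrite /scen_coef natr_prod -big_split /= big1 // => ij _.
by rewrite mulVf // pnatr_eq0 -lt0n fact_gt0.
Qed.

Lemma card_markings_scen (k : nat) (m : msp k r) (T : scen r) : is_scen T ->
  (#|[set J : {ffun {set 'I_k} -> 'I_r.+1} |
       marking (fun S => (m S : nat)) (fun ij => (T.2 ij : nat)) J]|)%:R =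
  (\prod_i (exps_of m i) ^_ (scen_len T i))%:R * scen_coef T :> rat.
Proof.
move=> /andP [/forallP hT _].
have hmu (i j : 'I_r) : (i < j)%N -> (T.2 (i, j) : nat) = 0%N.
  by move=> hij; move: (hT i) => /forallP /(_ j) /implyP /(_ hij) /eqP.
have := congr1 (fun n : nat => n%:R : rat)
  (@card_markings _ r' _ (fun S => leq_ord (m S)) (fun ij => T.2 ij : nat) hmu).
rewrite natrM => h.
set F := (\prod_ij _)%:R in h; set G := (#|_|)%:R in h *.
have -> : G = G * (F * scen_coef T) by rewrite [F * _]mulrC scen_coefK mulr1.
rewrite mulrA h; congr (_%:R * _).
by apply: eq_bigr => i _; rewrite ffunE.
Qed.

Lemma P_coef (k : nat) (e : expo r) :
  P r k e = \sum_(m : msp k r | is_msp m) (exps_of m == e)%:R.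
Proof.
rewrite /P card_set_indicator natr_sum [RHS]big_mkcond /=.
by apply: eq_bigr => m _; case: (is_msp m).
Qed.

Lemma card_msp_succ (k : nat) (e : expo r) :
  (#|[set m' : msp k.+1 r | is_msp m' && (exps_of m' == e)]| =
   \sum_(m : msp k r | is_msp m) \sum_(T : scen r | is_scen T)
     #|[set J : {ffun {set 'I_k} -> 'I_r.+1} |
         marking (fun S => (m S : nat)) (fun ij => (T.2 ij : nat)) J]| *
     (next_expo m T == e))%N.
Proof.
rewrite card_set_indicator.
transitivity (\sum_(m' : msp k.+1 r | is_msp m') (exps_of m' == e : nat))%N.
  by rewrite [RHS]big_mkcond; apply: eq_bigr => m' _; case: (is_msp m').
rewrite (sum_msp_glue (fun m' : msp k.+1 r => exps_of m' == e)) /=.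
rewrite (eq_bigl (fun p : msp k r * {ffun {set 'I_k} -> 'I_r.+1} =>
    is_msp p.1 && ([forall S, (p.2 S <= p.1 S)%N] && (total p.2 <= r)%N))); last first.
  by move=> p; rewrite /admissible andbA.
transitivity (\sum_(m : msp k r | is_msp m)
    \sum_(J : {ffun {set 'I_k} -> 'I_r.+1} | [forall S, (J S <= m S)%N] && (total J <= r)%N)
      (exps_of (glue (m, J)) == e : nat))%N; first by rewrite pair_big_dep.
apply: eq_bigr => m hm.
rewrite (partition_big (fun J => scenario_of (m, J)) (fun T => is_scen T)); last first.
  by move=> J hJ; apply: is_scen_scenario; rewrite /admissible /= hm.
apply: eq_bigr => T hT.
rewrite (eq_bigr (fun J => (next_expo m T == e : nat))); last first.
  by move=> J /andP [hJ /eqP <-]; rewrite exps_glue // /admissible /= hm.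
rewrite -(card_marks_of_scenario hm hT) -sum_nat_const.
by apply: eq_bigl => J; rewrite inE.
Qed.

Lemma PT_P (k : nat) (T : scen r) (e : expo r) : is_scen T ->
  PT T (P r k) e = \sum_(m : msp k r | is_msp m)
    (#|[set J : {ffun {set 'I_k} -> 'I_r.+1} |
        marking (fun S => (m S : nat)) (fun ij => (T.2 ij : nat)) J]| *
     (next_expo m T == e))%:R.
Proof.
move=> hT; rewrite /PT /mulmono.
have match_e m := falling_match (exps_of m) (scen_mono T) e (scen_len T).
case: ifP => hle in match_e *; last first.
  rewrite mulr0 big1 // => m hm.
  by rewrite natrM card_markings_scen // mulrAC -natrM /next_expo match_e mul0r.
rewrite derivs_eq P_coef big_distrr big_distrr /=; apply: eq_bigr => m hm.
rewrite [RHS]natrM card_markings_scen // mulrAC -[in RHS]natrM /next_expo match_e.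
by rewrite natrM mulrC.
Qed.

Lemma P_succ (k : nat) : P r k.+1 =1 Dop (P r k).
Proof.
move=> e; rewrite [in LHS]/P card_msp_succ natr_sum /Dop.
under eq_bigr do rewrite natr_sum.
by rewrite exchange_big /=; apply: eq_bigr => T hT; rewrite PT_P.
Qed.

End Recursion.

Local Open Scope ring_scope.

(* The exponents a_i(pi) count families of subsets of {1..n}, hence are at
   most 2^n: evaluation at z = (1,..,1) over the box of exponents <= 2^n
   therefore sums all coefficients of P_n. *)
Lemma card_family_le n (A : {set {set 'I_n}}) : (#|A| <= 2 ^ n)%N.
Proof.
have -> : (2 ^ n = #|powerset [set: 'I_n]|)%N by rewrite card_powerset cardsT card_ord.
by apply: subset_leq_card; apply/subsetP => S _; rewrite powersetE subsetT.
Qed.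

Lemma count_msp_eval_ones n r :
  (#|[set m : msp n r | is_msp m]|)%:R = eval_ones n (P r n) :> rat.
Proof.
rewrite /eval_ones /P; under eq_bigr do rewrite card_set_indicator.
rewrite -natr_sum card_set_indicator exchange_big /=; congr (_%:R).
apply: eq_bigr => m _; case: (is_msp m) => /=; last by rewrite big1.
pose e0 : {ffun 'I_r -> 'I_(2 ^ n).+1} := [ffun t => inord (exps_of m t)].
have he0 : [ffun t => nat_of_ord (e0 t)] = exps_of m.
  by apply/ffunP => t; rewrite !ffunE inordK // ltnS /a_i card_family_le.
rewrite (bigD1 e0) //= he0 eqxx big1 // => e ne.
case: eqP => // he; move/eqP: ne; case; apply/ffunP => t.
by apply: val_inj; move/ffunP: he => /(_ t); rewrite -he0 ffunE [in RHS]ffunE => h; exact: esym h.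
Qed.

Theorem mainTheorem2 (r : nat) : (0 < r)%N ->
  (forall n : nat, (0 < n)%N -> P r n =1 Dop (P r n.-1)) /\
  (forall n : nat, (#|[set m : msp n r | is_msp m]|)%:R = eval_ones n (P r n) :> rat).
Proof.
case: r => // r' _; split => [|n]; last exact: count_msp_eval_ones.
by case=> // k _; exact: P_succ.
Qed.
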